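(* In the segregation process, suppose that $F$ is an $x$-firewall incubator (in the initial configuration) and there exist a left-pseudo-transcript and a right-pseudo-transcript of $F$ all of whose partial sums are non-negative. Then $F$ becomes an $x$-firewall, i.e. at some time every node of $F$ is occupied by an individual of type $x$.
   Context: Segregation process: the nodes of an $n$-cycle are indexed mod $n$; at every time there is a bijection between $n$ individuals and the nodes, each individual having type $x$ or $o$; initially each node independently gets label $x$ or $o$ with probability $1/2$. With sign $+1$ for $x$ and $-1$ for $o$, the $x$-bias $\beta_t(i)$ of node $i$ at time $t$ is the sum of the signs of the labels of nodes $i-w,\dots,i+w$. An $x$-individual at $i$ is happy iff $\beta_t(i)>0$, an $o$-individual iff $\beta_t(i)<0$; otherwise unhappy. At each time step two individuals are chosen uniformly at random (a proposed swap); if both are unhappy and of opposite types they exchange nodes, otherwise nothing changes. A block is a sequence of consecutive nodes; a firewall is a block of at least $w+1$ consecutive nodes with identical labels. An $x$-firewall incubator is a block $F$ made up of consecutive blocks $D_L,I,D_R$ (left to right) such that $|D_L|=|D_R|=w+1$, $\beta_0(i)>\sqrt w$ for all $i\in F$, the minimum of $\beta_0$ over $D_L$ is attained at its left endpoint and the minimum of $\beta_0$ over $D_R$ is attained at its right endpoint. $A_L$, $A_R$ denote the blocks of $w$ nodes immediately to the left and right of $F$. The satisfaction time of an individual is the first time at which it is selected for a proposed swap together with an unhappy individual of the opposite type ($\infty$ if none); an individual is impatient at time $t$ if it is unhappy at time $t$ and $t$ is at most its satisfaction time. A left attacking $x$ is an $x$-individual in $A_L$ at time $0$; a left defending $o$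 is an $o$-individual in $D_L$ at time $0$; these are the left combatants (right combatants defined analogously with $A_R,D_R$). The left-transcript is the sign sequence obtained by listing the left combatants in reverse (decreasing) order of satisfaction time and writing $+1$ for each attacking $x$ and $-1$ for each defending $o$; the right-transcript is defined analogously. If there exists a time $t_0$ at which no individual in $F$ is impatient, any sign sequence obtained from the left- (resp. right-) transcript by permuting the signs associated to individuals whose satisfaction time is after $t_0$, while fixing all other signs, is a left- (resp. right-) pseudo-transcript. The $k$-th partial sum of a sequence is the sum of its first $k$ elements. *)

(* Deterministic description of the segregation process
   driven by an arbitrary initial labelling and an arbitrary sequence of
   proposed swaps. *)
From HB Require Import structures.
From mathcomp Require Import all_boot all_order all_algebra.
Set Implicit Arguments. Unset Strict Implicit. Unset Printing Implicit Defensive.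
Import Order.TTheory GRing.Theory Num.Theory.
Local Open Scope ring_scope.

(* Conventions.
   - Nodes of the n-cycle are 0..n-1; a node may be given by any integer k,
     meaning node (k mod n).
   - Individuals are named 0..n-1: individual a initially sits at node a,
     and has the fixed type [typ a] (true = x, false = o).
   - An occupancy [o : nat -> nat] maps a node to the individual on it. *)

Definition sgnb (b : bool) : int := if b then 1 else -1.

Definition node (n : nat) (k : int) : nat := absz (k %% n%:Z)%Z.

Definition lab (n : nat) (typ : nat -> bool) (o : nat -> nat) (k : int) : bool :=
  typ (o (node n k)).

Definition bias (n w : nat) (typ : nat -> bool) (o : nat -> nat) (i : int) : int :=
  \sum_(j < (2 * w).+1) sgnb (lab n typ o (i - w%:Z + j%:Z)).

Definition unhappy_node (n w : nat) (typ : nat -> bool) (o : nat -> nat) (i : int) : bool :=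
  if lab n typ o i then bias n w typ o i <= 0 else 0 <= bias n w typ o i.

Definition unhappy_ind (n w : nat) (typ : nat -> bool) (o : nat -> nat) (a : nat) : bool :=
  [exists k : 'I_n, (o k == a) && unhappy_node n w typ o (k%:Z)].

Definition swap_occ (o : nat -> nat) (a b : nat) : nat -> nat :=
  fun k => if o k == a then b else if o k == b then a else o k.

Definition step (n w : nat) (typ : nat -> bool) (o : nat -> nat) (p : nat * nat) : nat -> nat :=
  if [&& unhappy_ind n w typ o p.1, unhappy_ind n w typ o p.2 & typ p.1 != typ p.2]
  then swap_occ o p.1 p.2 else o.

Fixpoint occ (n w : nat) (typ : nat -> bool) (prop : nat -> nat * nat) (t : nat) : nat -> nat :=
  match t with
  | 0 => id
  | t'.+1 => step n w typ (occ n w typ prop t') (prop t')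
  end.

Definition satisfied_at (n w : nat) (typ : nat -> bool) (prop : nat -> nat * nat)
    (t : nat) (a : nat) : bool :=
  let o := occ n w typ prop t in
  let p := prop t in
  ((p.1 == a) && unhappy_ind n w typ o p.2 && (typ p.2 != typ a)) ||
  ((p.2 == a) && unhappy_ind n w typ o p.1 && (typ p.1 != typ a)).

Definition sat_by n w typ prop (t a : nat) : bool :=
  [exists s : 'I_t.+1, satisfied_at n w typ prop s a].

(* satisfaction time of a <= satisfaction time of b (infinity allowed) *)
Definition sat_le n w typ prop (a b : nat) : Prop :=
  forall t, sat_by n w typ prop t b -> sat_by n w typ prop t a.

Definition impatient n w typ prop (t a : nat) : bool :=
  unhappy_ind n w typ (occ n w typ prop t) a &&
  ~~ [exists s : 'I_t, satisfied_at n w typ prop s a].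

Definition in_block (n : nat) (s : int) (m : nat) (k : nat) : bool :=
  [exists j : 'I_m, k == node n (s + j%:Z)].

(* x-firewall incubator F = nodes s, ..., s+m-1, with D_L = first w+1 nodes,
   D_R = last w+1 nodes, evaluated on the initial configuration (occupancy id).
   beta_0(i) > sqrt w is written as beta_0(i) > 0 /\ beta_0(i)^2 > w
   (equivalent for an integer beta_0(i)). *)
Definition x_firewall_incubator (n w : nat) (typ : nat -> bool) (s : int) (m : nat) : Prop :=
  let b := bias n w typ id in
  [/\ (2 * w + 2 <= m)%N,
      (forall j : nat, (j < m)%N ->
          0 < b (s + j%:Z) /\ w%:Z < b (s + j%:Z) ^+ 2),
      (forall j : nat, (j <= w)%N -> b s <= b (s + j%:Z)) &
      (forall j : nat, (j <= w)%N ->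
          b (s + m%:Z - 1) <= b (s + m%:Z - 1 - j%:Z))].

(* left combatants: attacking x's in A_L (w nodes left of F) and defending
   o's in D_L, at time 0 *)
Definition left_combatant (n w : nat) (typ : nat -> bool) (s : int) (m : nat) (a : nat) : bool :=
  (in_block n (s - w%:Z) w a && typ a) || (in_block n s w.+1 a && ~~ typ a).

Definition right_combatant (n w : nat) (typ : nat -> bool) (s : int) (m : nat) (a : nat) : bool :=
  (in_block n (s + m%:Z) w a && typ a) ||
  (in_block n (s + m%:Z - w.+1%:Z) w.+1 a && ~~ typ a).

Definition no_impatient_in_F n w typ prop (s : int) (m t0 : nat) : Prop :=
  forall k : nat, (k < n)%N -> in_block n s m k ->
    ~~ impatient n w typ prop t0 (occ n w typ prop t0 k).

(* sq is a pseudo-transcript for the set of combatants comb: L lists the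
   combatants (each once) in (weakly) decreasing order of satisfaction time,
   and sq is obtained from the signs of L by permuting the signs of the
   individuals whose satisfaction time is after t0. *)
Definition pseudo_transcript n w typ prop (s : int) (m : nat)
    (comb : nat -> bool) (sq : seq int) : Prop :=
  exists (t0 : nat) (L : seq nat),
    [/\ no_impatient_in_F n w typ prop s m t0,
        uniq L,
        (forall a, (a \in L) = comb a),
        (forall i j : nat, (i < j < size L)%N ->
            sat_le n w typ prop (nth 0%N L j) (nth 0%N L i)) &
        let sg := [seq sgnb (typ a) | a <- L] in
        let mk := [seq ~~ sat_by n w typ prop t0 a | a <- L] in
        [/\ size sq = size L,
            perm_eq (mask mk sq) (mask mk sg) &
            mask [seq ~~ b | b <- mk] sq = mask [seq ~~ b | b <- mk] sg]].

Definition partial_sums_nonneg (sq : seq int) : Prop :=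
  forall k : nat, (k <= size sq)%N -> 0 <= \sum_(i < k) sq`_i.

From HB Require Import structures.
From mathcomp Require Import all_boot all_order all_algebra.
From mathcomp Require Import ring zify.
Set Implicit Arguments. Unset Strict Implicit. Unset Printing Implicit Defensive.
Import Order.TTheory GRing.Theory Num.Theory.

Local Open Scope ring_scope.

(* An x on a node of positive bias is happy, hence never moves; so once the
   bias is positive on all of F up to a time t0 at which no individual of F is
   impatient, every o still in F is unhappy and already satisfied, i.e. it has
   been replaced by an x.  In the interior of F only x's can arrive, so the
   bias does not decrease there.  Near an end of F, the bias at the end node
   is initially 2 S + 1, with S the sum of the signs of the combatants, and it
   is minimal over the defending block.  A combatant alters the window only
   after being satisfied, costing at most twice its sign, and the signs of the
   combatants not yet satisfied sum to a prefix sum of the pseudo-transcript,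
   which is non-negative; hence the bias stays at least 1. *)

Section Cycle.
Variable n : nat.
Hypothesis n_gt0 : (0 < n)%N.

Lemma nodeZ x : (node n x)%:Z = (x %% n)%Z.
Proof. by rewrite /node gez0_abs // modz_ge0 //; lia. Qed.

Lemma node_lt x : (node n x < n)%N.
Proof. by rewrite -ltz_nat nodeZ ltz_pmod //; lia. Qed.

Lemma node_nat (k : nat) : (k < n)%N -> node n k%:Z = k.
Proof. by move=> lt_kn; rewrite /node modz_small //; apply/andP; split; lia. Qed.

Lemma nodeDl x y : node n ((node n x)%:Z + y) = node n (x + y).
Proof. by rewrite /node nodeZ modzDml. Qed.

Lemma bias_node w typ o x : bias n w typ o (node n x)%:Z = bias n w typ o x.
Proof. by apply: eq_bigr => j _; rewrite /lab -!addrA nodeDl. Qed.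

Lemma lab_nat typ o (k : nat) : (k < n)%N -> lab n typ o k%:Z = typ (o k).
Proof. by move=> lt_kn; rewrite /lab node_nat. Qed.

End Cycle.

Section Dynamics.
Variables (n w : nat) (typ : nat -> bool) (prop : nat -> nat * nat).
Hypothesis n_gt0 : (0 < n)%N.
Hypothesis prop_neq : forall t, (prop t).1 != (prop t).2.

Local Notation occ := (occ n w typ prop).
Local Notation satisfied_at := (satisfied_at n w typ prop).

Lemma swap_occ_inj o a b : a != b -> injective o -> injective (swap_occ o a b).
Proof.
move=> /eqP neq_ab inj_o x y; rewrite /swap_occ => E; apply: inj_o; move: E.
by do ![case: ifP => /eqP]; congruence.
Qed.

Lemma occ_inj t : injective (occ t).
Proof.
elim: t => [|t IH] /=; first exact: inj_id.
by rewrite /step; case: ifP => _ //; apply: swap_occ_inj.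
Qed.

Lemma unhappy_ind_occ t (k : nat) : (k < n)%N ->
  unhappy_ind n w typ (occ t) (occ t k) = unhappy_node n w typ (occ t) k%:Z.
Proof.
move=> lt_kn; apply/existsP/idP => [[k' /andP[/eqP /occ_inj -> //]]|U].
by exists (Ordinal lt_kn); rewrite eqxx.
Qed.

Lemma unhappy_positive_x t (k : nat) : (k < n)%N ->
  0 < bias n w typ (occ t) k%:Z -> typ (occ t k) ->
  unhappy_ind n w typ (occ t) (occ t k) = false.
Proof.
move=> lt_kn pos x_k.
by rewrite unhappy_ind_occ // /unhappy_node lab_nat // x_k leNgt pos.
Qed.

Lemma unhappy_positive_o t (k : nat) : (k < n)%N ->
  0 < bias n w typ (occ t) k%:Z -> ~~ typ (occ t k) ->
  unhappy_ind n w typ (occ t) (occ t k).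
Proof.
move=> lt_kn pos o_k.
by rewrite unhappy_ind_occ // /unhappy_node lab_nat // (negbTE o_k) ltW.
Qed.

Lemma occ_unsatisfied t a : (forall u, (u < t)%N -> ~~ satisfied_at u a) ->
  occ t a = a.
Proof.
elim: t => [//|t IH] unsat /=.
have {IH}occ_a : occ t a = a by apply: IH => u lt_ut; apply: unsat; lia.
have := unsat t (ltnSn t); rewrite /satisfied_at /step.
case: ifP => //= /and3P[U1 U2 T12]; rewrite /swap_occ occ_a.
case: (eqVneq (prop t).1 a) => [<-|_]; first by rewrite eqxx U2 eq_sym T12.
by case: (eqVneq (prop t).2 a) => [<-|_]; first by rewrite eqxx U1 T12 orbT.
Qed.

Lemma x_persists_step t (k : nat) : (k < n)%N ->
  0 < bias n w typ (occ t) k%:Z -> typ (occ t k) -> typ (occ t.+1 k).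
Proof.
move=> lt_kn pos x_k /=; rewrite /step; case: ifP => //= /and3P[U1 U2 _].
have happy := @unhappy_positive_x t k lt_kn pos x_k.
rewrite /swap_occ; case: ifP => [/eqP E|_]; first by rewrite -E happy in U1.
by case: ifP => [/eqP E|_]; first by rewrite -E happy in U2.
Qed.

Lemma x_persists t T (k : nat) : (t <= T)%N -> (k < n)%N ->
  (forall u, (t <= u < T)%N -> 0 < bias n w typ (occ u) k%:Z) ->
  typ (occ t k) -> typ (occ T k).
Proof.
move=> + lt_kn; elim: T => [|T IH] le_tT pos x_k.
  by move: x_k; rewrite (_ : t = 0%N) //; lia.
case: (leqP t T) => [le_tT'|]; last by move=> ?; rewrite (_ : T.+1 = t) //; lia.
by apply: x_persists_step; [|apply: pos; lia|apply: IH => // u ?; apply: pos; lia].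
Qed.

Lemma o_node_stays_or_x t (k : nat) : (k < n)%N -> ~~ typ k ->
  (forall u, (u < t)%N -> 0 < bias n w typ (occ u) k%:Z) ->
  occ t k = k \/ typ (occ t k).
Proof.
move=> lt_kn o_k; elim: t => [|t IH] pos; first by left.
case: IH => [u ?|occ_k|x_k]; first by apply: pos; lia.
- rewrite /= /step; case: ifP => [/and3P[_ _ T12]|_]; last by left.
  rewrite /swap_occ occ_k; case: ifP => [/eqP E|_].
    by right; move: T12 o_k; rewrite -E; case: (typ k); case: (typ _).
  case: ifP => [/eqP E|_]; last by left.
  by right; move: T12 o_k; rewrite -E; case: (typ k); case: (typ _).
- by right; apply: x_persists_step => //; apply: pos.
Qed.

Lemma satisfied_o_replaced T (k : nat) u : (k < n)%N -> ~~ typ k ->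
  (forall v, (v < T)%N -> 0 < bias n w typ (occ v) k%:Z) -> (u < T)%N ->
  satisfied_at u k -> typ (occ T k).
Proof.
move=> lt_kn o_k pos lt_uT sat_u.
apply: (@x_persists u.+1) => // [v /andP[_ ?]|]; first by apply: pos.
case: (@o_node_stays_or_x u k) => // [v ?|occ_k|x_k]; first by apply: pos; lia.
- have U : unhappy_ind n w typ (occ u) k.
    by rewrite -[X in unhappy_ind _ _ _ _ X]occ_k unhappy_positive_o ?occ_k ?pos.
  rewrite /= /step /swap_occ /=.
  case/orP: sat_u => /andP[/andP[/eqP E U'] T12].
  + rewrite E U U' (eq_sym (typ k)) T12 /= occ_k eqxx.
    by move: T12 o_k; case: (typ k); case: (typ _).
  + have neq_k1 : k != (prop u).1 by rewrite -E eq_sym.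
    rewrite E U U' T12 /= occ_k (negbTE neq_k1) eqxx.
    by move: T12 o_k; case: (typ k); case: (typ _).
- by apply: x_persists_step => //; apply: pos.
Qed.

End Dynamics.

Lemma big_mask_split (R : nmodType) (T : Type) (m : bitseq) (x : seq T) (F : T -> R) :
  size m = size x ->
  \sum_(v <- x) F v = \sum_(v <- mask m x) F v + \sum_(v <- mask (map negb m) x) F v.
Proof.
elim: x m => [|v x IH] [|b m] //= => [_|[sz]]; first by rewrite !big_nil addr0.
by case: b; rewrite /= !big_cons (IH m sz); [exact: addrA | exact: addrCA].
Qed.

Lemma sum_take (R : nmodType) (x : seq R) K : (K <= size x)%N ->
  \sum_(i < K) x`_i = \sum_(v <- take K x) v.
Proof.
move=> le_Kx; rewrite (big_nth 0) size_take_min (minn_idPl le_Kx) big_mkord.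
by apply: eq_bigr => i _; rewrite nth_take.
Qed.

Lemma mask_take_eq (T : eqType) (m : bitseq) (x y : seq T) K :
  size x = size m -> size y = size m -> mask m x = mask m y ->
  mask (take K m) (take K x) = mask (take K m) (take K y).
Proof.
move=> sx sy E.
have szx : size (take K m) = size (take K x) by rewrite !size_take sx.
have szy : size (take K m) = size (take K y) by rewrite !size_take sy.
have /eqP : mask (take K m ++ drop K m) (take K x ++ drop K x) =
            mask (take K m ++ drop K m) (take K y ++ drop K y).
  by rewrite !cat_take_drop.
rewrite !mask_cat // eqseq_cat ?size_mask //.
by case/andP=> /eqP.
Qed.

Lemma mask_take_small (T : Type) (m : bitseq) (x : seq T) K :
  size x = size m -> (forall i, nth false m i -> (i < K)%N) ->
  mask m x = mask (take K m) (take K x).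
Proof.
move=> sx lt_m.
have /all_pred1P drop_false : all (pred1 false) (drop K m).
  apply/(all_nthP false) => i lt_i; rewrite nth_drop /=.
  by apply/eqP/negbTE/negP => /lt_m; rewrite ltnNge leq_addr.
rewrite -{1}(cat_take_drop K m) -{1}(cat_take_drop K x) mask_cat ?size_take ?sx //.
by rewrite drop_false mask_false cats0.
Qed.

Lemma prefix_sum_eq_mask (R : nmodType) (m : bitseq) (x y : seq R) K :
  (K <= size m)%N -> size x = size m -> size y = size m ->
  (forall i, nth false m i -> (i < K)%N) ->
  perm_eq (mask m x) (mask m y) -> mask (map negb m) x = mask (map negb m) y ->
  \sum_(i < K) x`_i = \sum_(i < K) y`_i.
Proof.
move=> le_Km sx sy lt_m pm eq_nm.
have szx : size (take K m) = size (take K x) by rewrite !size_take sx.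
have szy : size (take K m) = size (take K y) by rewrite !size_take sy.
rewrite !sum_take ?sx ?sy // (big_mask_split _ szx) (big_mask_split _ szy).
rewrite -!mask_take_small // (perm_big _ pm) map_take.
by rewrite (mask_take_eq K _ _ eq_nm) ?size_map.
Qed.

Section Transcript.
Variables (n w : nat) (typ : nat -> bool) (prop : nat -> nat * nat).

Definition satisfied_before T a := [exists u : 'I_T, satisfied_at n w typ prop u a].

Lemma satisfied_before_mono T T' a :
  (T <= T')%N -> satisfied_before T a -> satisfied_before T' a.
Proof. by move=> le_TT' /existsP[u sat_u]; apply/existsP; exists (widen_ord le_TT' u). Qed.

Lemma satisfied_before_le T a b :
  sat_le n w typ prop a b -> satisfied_before T b -> satisfied_before T a.
Proof. by move=> le_ab; case: T => [/existsP[[]]|T] //; apply: le_ab. Qed.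

Lemma satisfied_before_sorted T (L : seq nat) :
  (forall i j, (i < j < size L)%N ->
     sat_le n w typ prop (nth 0%N L j) (nth 0%N L i)) ->
  forall i, (i < size L)%N ->
  satisfied_before T (nth 0%N L i) = (find (satisfied_before T) L <= i)%N.
Proof.
move=> sorted_L i lt_iL; set K := find _ L.
case: (ltnP i K) => [lt_iK|le_Ki]; first by rewrite (before_find _ lt_iK).
have sat_K : satisfied_before T (nth 0%N L K) by apply: nth_find; rewrite has_find; lia.
case: (ltngtP K i) le_Ki => // [lt_Ki|<-] _ //.
by apply: satisfied_before_le sat_K; apply: sorted_L; apply/andP.
Qed.

Lemma pseudo_transcript_nonneg s m comb sq :
  pseudo_transcript n w typ prop s m comb sq -> partial_sums_nonneg sq ->
  exists t0 (L : seq nat), [/\ no_impatient_in_F n w typ prop s m t0, uniq L,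
    (forall a, (a \in L) = comb a) &
    forall T, (T <= t0.+1)%N ->
      0 <= \sum_(a <- L | ~~ satisfied_before T a) sgnb (typ a)].
Proof.
move=> [t0 [L [no_imp uniq_L mem_L sorted_L [sz_sq perm_sq mask_sq]]]] ps_sq.
exists t0, L; split=> // T le_T.
set K := find (satisfied_before T) L; set sg := [seq sgnb (typ a) | a <- L].
have le_KL : (K <= size L)%N := find_size _ _.
have sat_L := satisfied_before_sorted T sorted_L.
have -> : \sum_(a <- L | ~~ satisfied_before T a) sgnb (typ a) = \sum_(i < K) sg`_i.
  rewrite (big_nth 0%N) big_mkord (big_ord_widen _ _ le_KL).
  by apply: eq_big => i; rewrite ?sat_L // -?ltnNge // (nth_map 0%N).
rewrite -(prefix_sum_eq_mask (m := [seq ~~ sat_by n w typ prop t0 a | a <- L])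
  _ _ _ _ perm_sq mask_sq) ?size_map ?ps_sq ?sz_sq //.
move=> i; case: (ltnP i (size L)) => [lt_iL|le_Li]; last by rewrite nth_default ?size_map.
rewrite (nth_map 0%N) // ltnNge -sat_L //; apply: contraNN.
exact: satisfied_before_mono.
Qed.

End Transcript.

Lemma sum_sign_window (R : pzRingType) w :
  \sum_(q < (2 * w).+1) (if (q < w)%N then -1 else 1 : R) = 1.
Proof.
rewrite -(big_mkord xpredT (fun q => if (q < w)%N then -1 else 1 : R)).
rewrite (big_cat_nat (leq0n w) (_ : (w <= (2 * w).+1)%N)) /=; last lia.
rewrite (eq_big_nat _ _ (F2 := fun _ => -1 : R)); last by move=> i /andP[_ ->].
rewrite [X in _ + X](eq_big_nat _ _ (F2 := fun _ => 1 : R)); last first.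
  by move=> i /andP[le_wi _]; rewrite ltnNge le_wi.
rewrite !sumr_const_nat (_ : ((2 * w).+1 - w = w.+1)%N); last lia.
by rewrite subn0 mulNrn -addn1 natrD addrA addNr add0r.
Qed.

Lemma sum_shift_le (R : numDomainType) (h : nat -> R) N j : (j <= N)%N ->
  (forall q, (N <= q)%N -> h q = 0) -> (forall q, (q < j)%N -> 0 <= h q) ->
  \sum_(l < N) h (j + l)%N <= \sum_(q < N) h q.
Proof.
move=> le_jN h_out h_ge0.
rewrite -(big_mkord xpredT (fun l => h (j + l)%N)) -(big_mkord xpredT h).
rewrite (big_cat_nat (leq0n (N - j)) (leq_subr j N)) /=.
rewrite [X in _ + X]big1_seq ?addr0; last first.
  by move=> l /andP[_]; rewrite mem_iota => /andP[? ?]; apply: h_out; lia.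
have shift : \sum_(j <= q < N) h q = \sum_(0 <= l < N - j) h (j + l)%N.
  by rewrite -{1}[j]add0n big_addn; apply: eq_bigr => l _; rewrite addnC.
rewrite (big_cat_nat (leq0n j) le_jN) /= shift lerDr big_nat_cond.
by apply: sumr_ge0 => q /andP[/andP[_ lt_qj] _]; apply: h_ge0.
Qed.

Section Side.
Variables (n w : nat) (typ : nat -> bool) (prop : nat -> nat * nat).
Variables (m : nat) (e d : int).
Hypothesis n_gt0 : (0 < n)%N.
Hypothesis prop_neq : forall t, (prop t).1 != (prop t).2.
Hypothesis d_unit : d = 1 \/ d = -1.
Hypothesis le_mwn : (m + 2 * w <= n)%N.
Hypothesis le_wm : (2 * w + 2 <= m)%N.

Local Notation occ := (occ n w typ prop).
Local Notation satisfied_before := (satisfied_before n w typ prop).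

(* The block F is [e + d * p] for [p < m], so that [e] is one of its endpoints
   and [d] points inwards; [win q] is the node at offset [q - w] from [e] in
   direction [d], so the window [q < 2 w + 1] consists of the attacking block
   ([q < w]) and the defending block ([w <= q]). *)
Definition win (q : nat) := node n (e + d * (q%:Z - w%:Z)).

Definition combatant_at (q : nat) := if (q < w)%N then typ (win q) else ~~ typ (win q).

Definition combatant (a : nat) :=
  ([exists q : 'I_w, a == win q] && typ a) ||
  ([exists q : 'I_w.+1, a == win (w + q)] && ~~ typ a).

Lemma bias_dir o i : bias n w typ o i =
  \sum_(l < (2 * w).+1) sgnb (lab n typ o (i + d * (l%:Z - w%:Z))).
Proof.
case: d_unit => ->; first by apply: eq_bigr => l _; congr (sgnb (lab _ _ _ _)); lia.
rewrite (reindex_inj rev_ord_inj) /=; apply: eq_bigr => l _.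
by congr (sgnb (lab _ _ _ _)); have := ltn_ord l; lia.
Qed.

Lemma lab_win o j (l : nat) :
  lab n typ o (e + d * j%:Z + d * (l%:Z - w%:Z)) = typ (o (win (j + l))).
Proof. by rewrite /lab /win PoszD; congr (typ (o (node n _))); ring. Qed.

Lemma win_inj q q' : (q < (2 * w).+1)%N -> (q' < (2 * w).+1)%N -> win q = win q' -> q = q'.
Proof.
move=> lt_q lt_q' /(congr1 Posz); rewrite !nodeZ // => /eqP.
rewrite eqz_mod_dvd dvdzE.
have -> : absz (e + d * (q%:Z - w%:Z) - (e + d * (q'%:Z - w%:Z)))%R =
           absz (q%:Z - q'%:Z)%R.
  by case: d_unit => ->; lia.
case: (eqVneq q q') => // neq_qq' /dvdn_leq; lia.
Qed.

Lemma sum_combatants (L : seq nat) (P : pred nat) (f : nat -> int) :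
  uniq L -> (forall a, (a \in L) = combatant a) ->
  \sum_(a <- L | P a) f a = \sum_(q < (2 * w).+1 | combatant_at q && P (win q)) f (win q).
Proof.
move=> uniq_L mem_L.
have perm_L : perm_eq L [seq win q | q <- iota 0 (2 * w).+1 & combatant_at q].
  apply: uniq_perm => //.
    rewrite map_inj_in_uniq ?filter_uniq ?iota_uniq // => q q'.
    by rewrite !mem_filter !mem_iota => /andP[_ ?] /andP[_ ?]; apply: win_inj; lia.
  move=> a; rewrite mem_L; apply/idP/mapP.
    case/orP => /andP[/existsP[q /eqP ->] typ_a].
      exists (q : nat); rewrite // mem_filter mem_iota /combatant_at ltn_ord typ_a /=.
      by have := ltn_ord q; lia.
    exists (w + q)%N => //; rewrite mem_filter mem_iota /combatant_at.
    by rewrite ifN ?typ_a /=; have := ltn_ord q; lia.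
  case=> q; rewrite mem_filter mem_iota /combatant_at => /andP[+ lt_q] ->.
  case: ifP => lt_qw c_q; rewrite /combatant c_q andbT; apply/orP.
    by left; apply/existsP; exists (Ordinal lt_qw).
  have lt_q' : (q - w < w.+1)%N by lia.
  by right; apply/existsP; exists (Ordinal lt_q'); rewrite /= subnKC //; lia.
rewrite -(big_mkord (fun q => combatant_at q && P (win q)) (fun q => f (win q))).
by rewrite -big_filter_cond -big_map; apply: perm_big.
Qed.

Lemma bias_endpoint : bias n w typ id e =
  2 * \sum_(q < (2 * w).+1 | combatant_at q) sgnb (typ (win q)) + 1.
Proof.
rewrite bias_dir [X in 2 * X]big_mkcond mulr_sumr.
rewrite -[X in _ = _ + X](sum_sign_window int w) -big_split /=.
apply: eq_bigr => q _; have := lab_win id 0 q; rewrite mulr0 addr0 add0n => ->.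
by rewrite /combatant_at; case: (q < w)%N; case: typ.
Qed.

Definition unsatisfied_sum T := \sum_(q < (2 * w).+1 |
  combatant_at q && ~~ satisfied_before T (win q)) sgnb (typ (win q)).

Lemma combatant_sum_nonneg s comb sq :
  pseudo_transcript n w typ prop s m comb sq -> partial_sums_nonneg sq ->
  (forall a, comb a = combatant a) ->
  exists t0, no_impatient_in_F n w typ prop s m t0 /\
    forall T, (T <= t0.+1)%N -> 0 <= unsatisfied_sum T.
Proof.
move=> tr ps combE; have [t0 [L [no_imp uniq_L mem_L nonneg]]] := pseudo_transcript_nonneg tr ps.
exists t0; split=> // T le_T; rewrite /unsatisfied_sum.
rewrite -(sum_combatants (fun a => ~~ satisfied_before T a)
  (fun a => sgnb (typ a)) uniq_L) ?nonneg // => a.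
by rewrite mem_L.
Qed.

Variable T : nat.
Hypothesis bias_F_pos : forall v, (v < T)%N -> forall p, (p < m)%N ->
  0 < bias n w typ (occ v) (e + d * p%:Z).

Lemma bias_win_pos v q : (v < T)%N -> (w <= q < w + m)%N ->
  0 < bias n w typ (occ v) (win q)%:Z.
Proof.
move=> lt_vT /andP[le_wq lt_q]; rewrite bias_node // (subzn le_wq).
by apply: bias_F_pos => //; lia.
Qed.

Lemma x_win_persists q : (w <= q < w + m)%N -> typ (win q) -> typ (occ T (win q)).
Proof.
move=> q_F; apply: (x_persists n_gt0 prop_neq (leq0n T)); first exact: node_lt.
by move=> u /andP[_ lt_uT]; apply: bias_win_pos.
Qed.

(* A satisfied attacking x may have left, a satisfied defending o has been
   replaced by an x. *)
Definition satisfied_sign (q : nat) : int :=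
  if [&& (q < (2 * w).+1)%N, combatant_at q & satisfied_before T (win q)]
  then sgnb (typ (win q)) else 0.

Lemma sign_win_lower q : (q < w + m)%N ->
  sgnb (typ (win q)) - 2 * satisfied_sign q <= sgnb (typ (occ T (win q))).
Proof.
move=> lt_q; have lt_win : (win q < n)%N by apply: node_lt.
rewrite /satisfied_sign /combatant_at.
case: (ltnP q w) => [lt_qw|le_wq]; case x_q: (typ (win q)) => /=.
- rewrite (_ : (q < (2 * w).+1)%N) /=; last lia.
  case: ifP => [_|unsat]; first by case: typ.
  rewrite occ_unsatisfied ?x_q // => u lt_uT; apply: contraFN unsat => sat_u.
  by rewrite /satisfied_before; apply/existsP; exists (Ordinal lt_uT).
- by rewrite andbF; case: typ.
- by rewrite andbF x_win_persists //; apply/andP.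
- case: ifP => [/andP[_]|_]; last by case: typ.
  rewrite /satisfied_before => /existsP[u sat_u].
  rewrite (satisfied_o_replaced n_gt0 prop_neq lt_win _ _ (ltn_ord u) sat_u) ?x_q //.
  by move=> v lt_vT; apply: bias_win_pos => //; apply/andP.
Qed.

Lemma bias_win_lower j : (j <= w)%N ->
  bias n w typ id (e + d * j%:Z) - 2 * \sum_(l < (2 * w).+1) satisfied_sign (j + l)
  <= bias n w typ (occ T) (e + d * j%:Z).
Proof.
move=> le_jw; rewrite !bias_dir mulr_sumr -sumrB; apply: ler_sum => l _.
by rewrite !lab_win; apply: sign_win_lower; have := ltn_ord l; lia.
Qed.

Lemma bias_interior_ge j : (w <= j)%N -> (j + w < m)%N ->
  bias n w typ id (e + d * j%:Z) <= bias n w typ (occ T) (e + d * j%:Z).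
Proof.
move=> le_wj lt_jm; rewrite !bias_dir; apply: ler_sum => l _; rewrite !lab_win.
case: (typ _) / idP => [x_l|_]; last by case: typ.
by rewrite x_win_persists //; have := ltn_ord l; lia.
Qed.

Hypothesis unsatisfied_nonneg : 0 <= unsatisfied_sum T.
Hypothesis bias_min_end : forall j, (j <= w)%N ->
  bias n w typ id e <= bias n w typ id (e + d * j%:Z).

(* The endpoint bias is [2 S + 1], with [S] the sum of the combatants' signs;
   each node of the window lost at most twice the satisfied part of [S]. *)
Lemma bias_near_end_pos j : (j <= w)%N -> 0 < bias n w typ (occ T) (e + d * j%:Z).
Proof.
move=> le_jw.
set X := \sum_(q < (2 * w).+1 | combatant_at q && satisfied_before T (win q))
  sgnb (typ (win q)).
have lost_le : \sum_(l < (2 * w).+1) satisfied_sign (j + l) <= X.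
  have -> : X = \sum_(q < (2 * w).+1) satisfied_sign q.
    by rewrite /X big_mkcond; apply: eq_bigr => q _; rewrite /satisfied_sign ltn_ord.
  apply: sum_shift_le => [|q le_q|q lt_qj]; first lia.
    by rewrite /satisfied_sign ifN //; apply/negP => /and3P[? _ _]; lia.
  rewrite /satisfied_sign /combatant_at (_ : (q < w)%N); last lia.
  by case: ifP => // /and3P[_ -> _].
have split_S :
    \sum_(q < (2 * w).+1 | combatant_at q) sgnb (typ (win q)) = X + unsatisfied_sum T.
  exact: (bigID (fun q : 'I_(2 * w).+1 => satisfied_before T (win q))).
have := bias_win_lower le_jw; have := bias_min_end le_jw.
move: unsatisfied_nonneg lost_le; rewrite bias_endpoint split_S; clearbody X.
lia.
Qed.

End Side.

Lemma left_combatantE n w typ s m a :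
  left_combatant n w typ s m a = combatant n w typ s 1 a.
Proof.
rewrite /left_combatant /combatant /in_block /win.
by congr (_ && _ || _ && _); apply: eq_existsb => q; congr (a == node n _); lia.
Qed.

Lemma right_combatantE n w typ s m a :
  right_combatant n w typ s m a = combatant n w typ (s + m%:Z - 1) (-1) a.
Proof.
rewrite /right_combatant /combatant /in_block /win.
congr (_ && _ || _ && _); apply/existsP/existsP => -[q /eqP ->];
  by exists (rev_ord q); apply/eqP; congr (node n _); rewrite /=; have := ltn_ord q; lia.
Qed.

Section Incubator.
Variables (n w : nat) (typ : nat -> bool) (prop : nat -> nat * nat) (s : int) (m : nat).
Hypothesis n_gt0 : (0 < n)%N.
Hypothesis prop_neq : forall t, (prop t).1 != (prop t).2.
Hypothesis le_mwn : (m + 2 * w <= n)%N.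
Hypothesis incubator : x_firewall_incubator n w typ s m.

Local Notation occ := (occ n w typ prop).

Definition F_positive t := forall p, (p < m)%N -> 0 < bias n w typ (occ t) (s + p%:Z).

Lemma firewall_of_F_positive T : (forall t, (t <= T)%N -> F_positive t) ->
  no_impatient_in_F n w typ prop s m T ->
  forall j, (j < m)%N -> lab n typ (occ T) (s + j%:Z) = true.
Proof.
move=> pos no_imp j lt_jm; set k := node n (s + j%:Z).
have lt_kn : (k < n)%N by apply: node_lt.
have pos_k v : (v < T)%N -> 0 < bias n w typ (occ v) k%:Z.
  by move=> lt_vT; rewrite bias_node // pos //; apply: ltnW.
rewrite /lab -/k; case x_T: (typ (occ T k)) => //.
have o_k : ~~ typ k.
  apply/negP => x_k; move: x_T.
  by rewrite (x_persists n_gt0 prop_neq (leq0n T) lt_kn _ x_k) // => u /andP[_]; apply: pos_k.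
have occ_k : occ T k = k.
  by case: (o_node_stays_or_x n_gt0 prop_neq lt_kn o_k pos_k) => // x_T'; rewrite x_T' in x_T.
have unhappy_k : unhappy_ind n w typ (occ T) k.
  rewrite -[X in unhappy_ind _ _ _ _ X]occ_k unhappy_positive_o ?occ_k //.
  by rewrite bias_node // pos.
have in_F : in_block n s m k by apply/existsP; exists (Ordinal lt_jm).
move: (no_imp k lt_kn in_F); rewrite /impatient occ_k unhappy_k negbK.
case/existsP => u sat_u.
by rewrite (satisfied_o_replaced n_gt0 prop_neq lt_kn o_k pos_k (ltn_ord u) sat_u) in x_T.
Qed.

Variable T : nat.
Hypothesis left_nonneg : forall t, (t <= T)%N -> 0 <= unsatisfied_sum n w typ prop s 1 t.
Hypothesis right_nonneg : forall t, (t <= T)%N ->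
  0 <= unsatisfied_sum n w typ prop (s + m%:Z - 1) (-1) t.

Section Step.
Variable t : nat.
Hypothesis le_tT : (t <= T)%N.
Hypothesis pos_before : forall v, (v < t)%N -> F_positive v.

Let pos_left v : (v < t)%N -> forall p, (p < m)%N ->
  0 < bias n w typ (occ v) (s + 1 * p%:Z).
Proof. by move=> lt_vt p lt_pm; rewrite mul1r; apply: pos_before. Qed.

Lemma F_positive_left_end p : (p <= w)%N -> 0 < bias n w typ (occ t) (s + p%:Z).
Proof.
case: incubator => le_wm _ min_left _ le_pw.
have := bias_near_end_pos n_gt0 prop_neq (or_introl erefl) le_mwn le_wm pos_left
  (left_nonneg le_tT) _ le_pw.
by rewrite mul1r; apply=> j le_jw; rewrite mul1r min_left.
Qed.

Lemma F_positive_right_end p : (m - 1 - w <= p)%N -> (p < m)%N ->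
  0 < bias n w typ (occ t) (s + p%:Z).
Proof.
case: incubator => le_wm _ _ min_right le_p lt_pm.
have pos_right v : (v < t)%N -> forall p', (p' < m)%N ->
    0 < bias n w typ (occ v) (s + m%:Z - 1 + -1 * p'%:Z).
  move=> lt_vt p' lt_p'm.
  rewrite (_ : _ + _ = s + (m - 1 - p')%N%:Z); last lia.
  by apply: pos_before => //; lia.
rewrite (_ : s + p%:Z = s + m%:Z - 1 + -1 * (m - 1 - p)%N%:Z); last lia.
apply: (bias_near_end_pos n_gt0 prop_neq (or_intror erefl) le_mwn le_wm pos_right
  (right_nonneg le_tT)); last lia.
by move=> j le_jw; rewrite (_ : _ + _ * _ = s + m%:Z - 1 - j%:Z); [apply: min_right | lia].
Qed.

Lemma F_positive_interior p : (w < p)%N -> (p < m - 1 - w)%N ->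
  0 < bias n w typ (occ t) (s + p%:Z).
Proof.
case: incubator => le_wm pos0 _ _ lt_wp lt_p.
have := bias_interior_ge n_gt0 prop_neq (or_introl erefl) le_mwn le_wm pos_left
  (j := p) (ltnW lt_wp); rewrite !mul1r => ge0.
by apply: lt_le_trans (pos0 p _).1 (ge0 _); lia.
Qed.

End Step.

Lemma F_positive_until t : (t <= T)%N -> F_positive t.
Proof.
elim/ltn_ind: t => t IH le_tT p lt_pm.
have pos_before v : (v < t)%N -> F_positive v by move=> lt_vt; apply: IH => //; lia.
case: (leqP p w) => [le_pw|lt_wp]; first exact: F_positive_left_end.
case: (leqP (m - 1 - w) p) => [le_p|lt_p]; first exact: F_positive_right_end.
exact: F_positive_interior.
Qed.

End Incubator.

Theorem proposition3 (n w : nat) (typ : nat -> bool) (prop : nat -> nat * nat)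
    (s : int) (m : nat) :
  (0 < w)%N -> (m + 2 * w <= n)%N ->
  (forall t, [/\ ((prop t).1 < n)%N, ((prop t).2 < n)%N & (prop t).1 != (prop t).2]) ->
  x_firewall_incubator n w typ s m ->
  (exists sq, pseudo_transcript n w typ prop s m (left_combatant n w typ s m) sq
              /\ partial_sums_nonneg sq) ->
  (exists sq, pseudo_transcript n w typ prop s m (right_combatant n w typ s m) sq
              /\ partial_sums_nonneg sq) ->
  exists t : nat, forall j : nat, (j < m)%N ->
    lab n typ (occ n w typ prop t) (s + j%:Z) = true.
Proof.
move=> _ le_mwn prop_ok incubator [sqL [trL psL]] [sqR [trR psR]].
have n_gt0 : (0 < n)%N by case: incubator => *; lia.
have prop_neq t : (prop t).1 != (prop t).2 by case: (prop_ok t).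
have le_wm : (2 * w + 2 <= m)%N by case: incubator.
have [t0L [no_impL nnL]] := combatant_sum_nonneg n_gt0 (or_introl erefl) le_mwn le_wm
  trL psL (left_combatantE n w typ s m).
have [t0R [no_impR nnR]] := combatant_sum_nonneg n_gt0 (or_intror erefl) le_mwn le_wm
  trR psR (right_combatantE n w typ s m).
exists (minn t0L t0R).
apply: firewall_of_F_positive => //.
- by move=> t le_t; apply: F_positive_until le_t => // t' le_t'; [apply: nnL | apply: nnR]; lia.
- by case: (leqP t0L t0R).
Qed.
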